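(* Let $\ell$ and $w$ be linear spaces of sequences in $\mathbb{K}$ ($\mathbb{K}\in\{\mathbb{R},\mathbb{C}\}$), each endowed with a norm, quasi-norm or $\alpha$-norm, satisfying: (1) $\ell \subset c_0$ and $w\subset c_0$; (2) for all $x\in w$ and all $k\in\mathbb{N}$ one has $|x_k|\le \|x\|_w$; (3) $\ell$ is a linear subspace of $w$, the identity (embedding) operator $I\colon \ell\to w$ satisfies $0<\|I\|\le 1$, where $\|I\|=\sup_{x\in B_\ell}\|x\|_w$, and $e^j\in B_\ell$ for every $j\in\mathbb{N}$. Then $I$ is maximally non-compact, i.e. $\alpha(I)=\|I\|$.
   Context: $B_X$ denotes the closed unit ball of a (quasi/$\alpha$-)normed space $X$, and $e^j$ denotes the sequence with $1$ in the $j$-th position and $0$ elsewhere. $c_0$ is the space of scalar sequences converging to $0$. For a bounded map $T\colon X\to Y$ between (quasi/$\alpha$-)normed spaces, the ball measure of non-compactness is $\alpha(T)=\inf\{r>0:\ T(B_X)\subset\bigcup_{i=1}^m (y_i+rB_Y)\text{ for some } m\in\mathbb{N},\ y_1,\dots,y_m\in Y\}$, and the operator norm is $\|T\|=\sup_{x\in B_X}\|Tx\|$. $T$ is called maximally non-compact if $\alpha(T)=\|T\|$. *)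

From mathcomp Require Import all_boot all_order all_algebra.
From mathcomp Require Import all_classical all_reals all_analysis.
From mathcomp Require Import complex.

Set Implicit Arguments.
Unset Strict Implicit.
Unset Printing Implicit Defensive.

Import Order.TTheory GRing.Theory Num.Theory.
Import numFieldNormedType.Exports.
Local Open Scope classical_set_scope.
Local Open Scope ring_scope.

Section SeqSpaces.
(* Scalars K (R or C) with a real-valued absolute value absK : K -> R. *)
Variables (R : realType) (K : nzRingType) (absK : K -> R).

Definition zero_seq : nat -> K := fun _ => 0.
Definition add_seq (x y : nat -> K) : nat -> K := fun k => x k + y k.
Definition sub_seq (x y : nat -> K) : nat -> K := fun k => x k - y k.
Definition scale_seq (c : K) (x : nat -> K) : nat -> K := fun k => c * x k.

Definition unit_seq (j : nat) : nat -> K := fun k => if k == j then 1 else 0.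

Definition c0 : set (nat -> K) :=
  [set x | (fun k => absK (x k)) @ \oo --> (0 : R)].

Definition linear_space (L : set (nat -> K)) : Prop :=
  [/\ L zero_seq,
      (forall x y, L x -> L y -> L (add_seq x y)) &
      (forall c x, L x -> L (scale_seq c x))].

Definition quasi_norm (L : set (nat -> K)) (n : (nat -> K) -> R) (C : R) : Prop :=
  [/\ 1 <= C,
      (forall x, L x -> 0 <= n x),
      (forall x, L x -> (n x = 0 <-> x = zero_seq)),
      (forall c x, L x -> n (scale_seq c x) = absK c * n x) &
      (forall x y, L x -> L y -> n (add_seq x y) <= C * (n x + n y))].

Definition alpha_norm (L : set (nat -> K)) (n : (nat -> K) -> R) (a : R) : Prop :=
  [/\ 0 < a <= 1,
      (forall x, L x -> 0 <= n x),
      (forall x, L x -> (n x = 0 <-> x = zero_seq)),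
      (forall c x, L x -> n (scale_seq c x) = (absK c) `^ a * n x) &
      (forall x y, L x -> L y -> n (add_seq x y) <= n x + n y)].

(* a norm, quasi-norm or alpha-norm (norm = quasi-norm with C = 1) *)
Definition admissible_norm (L : set (nat -> K)) (n : (nat -> K) -> R) : Prop :=
  (exists C, quasi_norm L n C) \/ (exists a, alpha_norm L n a).

Definition unit_ball (L : set (nat -> K)) (n : (nat -> K) -> R) : set (nat -> K) :=
  [set x | L x /\ n x <= 1].

Definition embed_norm (L : set (nat -> K)) (nL : (nat -> K) -> R)
  (nW : (nat -> K) -> R) : \bar R :=
  ereal_sup [set (nW x)%:E | x in unit_ball L nL].

Definition finitely_covered (W : set (nat -> K)) (nW : (nat -> K) -> R)
  (S : set (nat -> K)) (r : R) : Prop :=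
  exists (m : nat) (y : nat -> (nat -> K)),
    (forall i, (i < m)%N -> W (y i)) /\
    S `<=` [set u | W u /\ exists2 i, (i < m)%N & nW (sub_seq u (y i)) <= r].

Definition embed_mnc (L : set (nat -> K)) (nL : (nat -> K) -> R)
  (W : set (nat -> K)) (nW : (nat -> K) -> R) : \bar R :=
  ereal_inf [set r%:E | r in [set r : R | 0 < r /\ finitely_covered W nW (unit_ball L nL) r]].

Definition maximally_noncompact_claim : Prop :=
  forall (L W : set (nat -> K)) (nL nW : (nat -> K) -> R),
    linear_space L -> admissible_norm L nL ->
    linear_space W -> admissible_norm W nW ->
    L `<=` c0 -> W `<=` c0 ->
    (forall x k, W x -> absK (x k) <= nW x) ->
    L `<=` W ->
    (0 < embed_norm L nL nW)%E -> (embed_norm L nL nW <= 1)%E ->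
    (forall j, unit_ball L nL (unit_seq j)) ->
    embed_mnc L nL W nW = embed_norm L nL nW.

End SeqSpaces.

(** The norm of [I] is exactly 1: [e^0] lies in [B_l] and the coordinate bound
    gives [||e^0||_w >= |e^0_0| = 1].  Hence the single ball of radius 1 about
    0 covers [I(B_l)], so [alpha(I) <= 1].  Conversely, the centres
    [y_1, ..., y_m] of any finite covering lie in [c_0], so for [J] large all
    [|y_i(J)| < e]; the ball containing [e^J] then has radius at least
    [||e^J - y_i||_w >= |1 - y_i(J)| > 1 - e]. *)
From mathcomp Require Import all_boot all_order all_algebra.
From mathcomp Require Import all_classical all_reals all_analysis.
From mathcomp Require Import complex.
Local Open Scope ring_scope.

Import Order.TTheory GRing.Theory Num.Theory.
Import numFieldNormedType.Exports.
Local Open Scope classical_set_scope.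

Section SequenceSpaces.
Variables (R : realType) (K : nzRingType) (absK : K -> R).
Hypothesis absKD : forall a b, absK (a + b) <= absK a + absK b.
Hypothesis absK1 : absK 1 = 1.

Lemma absK_1B a : 1 - absK a <= absK (1 - a).
Proof. by rewrite lerBlDr -{1}absK1 -{1}(subrK a 1) absKD. Qed.

Lemma unit_seq_diag j : unit_seq K j j = 1.
Proof. by rewrite /unit_seq eqxx. Qed.

Lemma linear_space_sub {L : set (nat -> K)} {x y} :
  linear_space L -> L x -> L y -> L (sub_seq x y).
Proof.
case=> _ addL scaleL Lx Ly.
have -> : sub_seq x y = add_seq x (scale_seq (-1) y).
  by apply/funext => k; rewrite /sub_seq /add_seq /scale_seq mulN1r.
exact: addL Lx (scaleL _ _ Ly).
Qed.

Lemma c0_near_lt x e :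
  c0 absK x -> 0 < e -> \forall j \near \oo, absK (x j) < e.
Proof. by move=> x0 e0; apply: cvgr_lt x0 _ e0. Qed.

Lemma finitely_covered_by_zero (W S : set (nat -> K)) (nW : (nat -> K) -> R) r :
  linear_space W -> S `<=` W -> (forall u, S u -> nW u <= r) ->
  finitely_covered W nW S r.
Proof.
move=> [W0 _ _] SW Sr; exists 1%N, (fun=> zero_seq K); split=> // u Su.
split; first exact: SW.
exists 0%N => //.
have -> : sub_seq u (zero_seq K) = u.
  by apply/funext => k; rewrite /sub_seq /zero_seq subr0.
exact: Sr.
Qed.

Lemma embed_norm_ub (nW : (nat -> K) -> R) {L : set (nat -> K)} {nL} {u} :
  unit_ball L nL u -> ((nW u)%:E <= embed_norm L nL nW)%E.
Proof. by move=> Bu; apply: ereal_sup_ubound; exists u. Qed.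

Section CoordinateBound.
Context {W : set (nat -> K)} {nW : (nat -> K) -> R}.
Hypothesis coord_le_norm : forall x k, W x -> absK (x k) <= nW x.

Lemma abs1_le_embed_norm {L : set (nat -> K)} {nL : (nat -> K) -> R} :
  L `<=` W -> unit_ball L nL (unit_seq K 0) ->
  ((absK 1)%:E <= embed_norm L nL nW)%E.
Proof.
move=> LW B_e0; apply: le_trans (embed_norm_ub nW B_e0).
rewrite lee_fin -[X in absK X](unit_seq_diag 0).
exact: coord_le_norm (LW _ B_e0.1).
Qed.

Hypothesis linW : linear_space W.
Hypothesis Wc0 : W `<=` c0 absK.

Lemma covering_radius_ge1 {S : set (nat -> K)} {r : R} :
  (forall j, S (unit_seq K j)) -> finitely_covered W nW S r -> 1 <= r.
Proof.
move=> Se [m [y [Wy cover]]]; apply/ler_addgt0Pr => e e0.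
have : \forall J \near \oo, forall i : 'I_m, absK (y i J) < e.
  by apply: filter_forall => i; apply: c0_near_lt (Wc0 _ (Wy i (ltn_ord i))) e0.
case=> J _ /(_ J (leqnn J)) yJ_small.
have [W_eJ [i im dist_le]] := cover _ (Se J).
have coordJ := coord_le_norm _ J (linear_space_sub linW W_eJ (Wy i im)).
rewrite /sub_seq unit_seq_diag in coordJ.
rewrite -lerBlDr; apply: le_trans (le_trans coordJ dist_le).
apply: le_trans (absK_1B _).
exact: lerB (lexx 1) (ltW (yJ_small (Ordinal im))).
Qed.

End CoordinateBound.

Lemma maximally_noncompact : maximally_noncompact_claim absK.
Proof.
move=> L W nL nW _ _ linW _ _ Wc0 coord LW _ Ile1 ej.
have normI1 : embed_norm L nL nW = 1%E.
  by apply/eqP; rewrite eq_le Ile1 -absK1 (abs1_le_embed_norm coord LW (ej 0)).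
rewrite normI1; apply/eqP; rewrite eq_le; apply/andP; split.
- apply: ereal_inf_lbound; exists 1 => //; split=> //.
  apply: finitely_covered_by_zero => // [u [Lu _]|u Bu]; first exact: LW.
  by rewrite -lee_fin (le_trans (embed_norm_ub nW Bu)) ?normI1.
- apply/ereal_infP => _ [r [_ cover] <-]; rewrite lee_fin.
  exact (covering_radius_ge1 coord linW Wc0 ej cover).
Qed.

End SequenceSpaces.

Theorem mainTheorem1 (R : realType) :
  maximally_noncompact_claim (fun x : R => `|x|) /\
  maximally_noncompact_claim (@Normc.normc R).
Proof.
split; apply: maximally_noncompact.
- exact: ler_normD.
- exact: normr1.
- exact: le_normcD.
- exact: Normc.normc1.
Qed.
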